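(* Let $n\ge 6$ and let $G\in B^{+}_n$. (1) $\mathrm{irr}_t(G)\ge 2n-2$. Equality holds if and only if the degree sequence of $G$ is $(4,2,\ldots,2)$, i.e. one vertex of degree $4$ and $n-1$ vertices of degree $2$. (2) If the degree sequence of $G$ is not $(4,2,\ldots,2)$, then $\mathrm{irr}_t(G)\ge 4n-6$. Equality holds if and only if the degree sequence of $G$ is $(4,3,2,\ldots,2,1)$, i.e. one vertex of degree $4$, one of degree $3$, $n-3$ of degree $2$ and one of degree $1$.
   Context: A bicyclic graph is a simple connected graph whose number of edges equals its number of vertices plus one. For a graph $G=(V,E)$ and $w\in V$, $d_G(w)$ is the degree of $w$. The total irregularity is $\mathrm{irr}_t(G)=\frac12\sum_{x,y\in V}|d_G(x)-d_G(y)|$, where the sum runs over all ordered pairs of vertices. Degree sequences are listed in nonincreasing order. For $p,q\ge 3$ and $l\ge 1$, the $\infty$-graph $\infty(p,q,l)$ is obtained from two vertex-disjoint cycles $C_p$ and $C_q$ by joining a vertex of $C_p$ and a vertex of $C_q$ with a path having $l$ vertices (i.e. length $l-1$). When $l=1$ the two vertices are identified, so the cycles share exactly one vertex. $B^{+}_n$ denotes the set of bicyclic graphs on $n$ vertices obtained from some $\infty(p,q,1)$ by attaching trees. Equivalently, these are the bicyclic graphs on $n$ vertices whose two cycles share exactly one vertex. *)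

From mathcomp Require Import all_boot.
Set Implicit Arguments. Unset Strict Implicit. Unset Printing Implicit Defensive.

Definition simple_graph (n : nat) (e : rel 'I_n) : Prop :=
  symmetric e /\ irreflexive e.

Definition connected_graph (n : nat) (e : rel 'I_n) : Prop :=
  forall x y : 'I_n, connect e x y.

(* Edge set: unordered pairs {x,y}, represented by (x,y) with x < y. *)
Definition edges (n : nat) (e : rel 'I_n) : {set 'I_n * 'I_n} :=
  [set p : 'I_n * 'I_n | (val p.1 < val p.2)%N && e p.1 p.2].

Definition bicyclic (n : nat) (e : rel 'I_n) : Prop :=
  simple_graph e /\ connected_graph e /\ #|edges e| = n.+1.

Definition is_graph_cycle (n : nat) (e : rel 'I_n) (c : seq 'I_n) : Prop :=
  [/\ uniq c, (3 <= size c)%N & cycle e c].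

Definition in_Bplus (n : nat) (e : rel 'I_n) : Prop :=
  bicyclic e /\
  exists c1 c2 : seq 'I_n,
    [/\ is_graph_cycle e c1, is_graph_cycle e c2 &
        #|[set x | (x \in c1) && (x \in c2)]| = 1].

Definition deg (n : nat) (e : rel 'I_n) (x : 'I_n) : nat := #|[set y | e x y]|.

Definition absdiff (a b : nat) : nat := (a - b) + (b - a).

(* Total irregularity: 1/2 * sum over ordered pairs of |d(x) - d(y)|
   (the ordered sum is always even, so the division is exact). *)
Definition irr_t (n : nat) (e : rel 'I_n) : nat :=
  (\sum_(x : 'I_n) \sum_(y : 'I_n) absdiff (deg e x) (deg e y)) %/ 2.

Definition degseq (n : nat) (e : rel 'I_n) : seq nat :=
  sort geq [seq deg e x | x <- enum 'I_n].

From mathcomp Require Import all_boot zify.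
Set Implicit Arguments. Unset Strict Implicit. Unset Printing Implicit Defensive.

(* The handshake lemma gives degree sum 2n + 2, connectivity makes every degree
   positive, and the vertex shared by the two cycles has four distinct
   neighbours.  Write the degree multiset as L ones, A twos and a multiset h of
   degrees >= 3.  Then irr_t = L A + L (L + |h| + 2) + A (L + 2) + irr_t(h), and
   the degree sum forces sum h = L + 2|h| + 2 > 3|h|, hence |h| <= L + 1.  If
   L = 0 then h = {4} and irr_t = 2n - 2; otherwise a case analysis on L gives
   irr_t >= 4n - 6, with equality exactly when L = 1 and h = {3, 4}. *)

Lemma absdiffC a b : absdiff a b = absdiff b a.
Proof. by rewrite /absdiff addnC. Qed.

Definition dist_sum (s t : seq nat) : nat := \sum_(a <- s) \sum_(b <- t) absdiff a b.

Lemma dist_sumC s t : dist_sum s t = dist_sum t s.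
Proof.
rewrite /dist_sum exchange_big; apply: eq_bigr => a _.
by apply: eq_bigr => b _; apply: absdiffC.
Qed.

Lemma dist_sum_catl s1 s2 t : dist_sum (s1 ++ s2) t = dist_sum s1 t + dist_sum s2 t.
Proof. exact: big_cat. Qed.

Lemma dist_sum_catr s t1 t2 : dist_sum s (t1 ++ t2) = dist_sum s t1 + dist_sum s t2.
Proof. by rewrite /dist_sum -big_split; apply: eq_bigr => a _; apply: big_cat. Qed.

Lemma dist_sum_cat s t :
  dist_sum (s ++ t) (s ++ t) = dist_sum s s + dist_sum t t + 2 * dist_sum s t.
Proof. rewrite dist_sum_catl !dist_sum_catr (dist_sumC t s); lia. Qed.

Lemma dist_sum_perm s1 s2 t1 t2 :
  perm_eq s1 s2 -> perm_eq t1 t2 -> dist_sum s1 t1 = dist_sum s2 t2.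
Proof.
move=> eq_s eq_t; rewrite /dist_sum (perm_big _ eq_s).
by apply: eq_bigr => a _; apply: perm_big.
Qed.

Lemma dist_sum_nseql m c t : dist_sum (nseq m c) t = m * \sum_(b <- t) absdiff c b.
Proof. by rewrite /dist_sum big_nseq iter_addn addn0 mulnC. Qed.

Lemma dist_sum_nseq m c m' c' :
  dist_sum (nseq m c) (nseq m' c') = m * (m' * absdiff c c').
Proof. by rewrite dist_sum_nseql big_nseq iter_addn addn0 (mulnC _ m'). Qed.

Lemma sum_absdiff_lb c t :
  all (leq c) t -> \sum_(b <- t) absdiff c b + c * size t = sumn t.
Proof.
elim: t => [|x t IH] /=; first by rewrite big_nil muln0.
case/andP=> le_cx /IH {}IH; rewrite big_cons mulnS.
have : absdiff c x = x - c by rewrite /absdiff; lia.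
lia.
Qed.

Lemma sumn_gt_size c t : all (leq c) t -> has (leq c.+1) t -> c * size t < sumn t.
Proof.
elim: t => //= x t IH /andP[le_cx le_ct] /orP[lt_cx|lt_ct]; rewrite mulnS.
  have := sum_absdiff_lb le_ct; lia.
have := IH le_ct lt_ct; lia.
Qed.

Lemma count_decomp L A h (a : pred nat) :
  count a (nseq L 1 ++ nseq A 2 ++ h) = a 1 * L + a 2 * A + count a h.
Proof. by rewrite !count_cat !count_nseq addnA. Qed.

Lemma perm_decomp s : all (leq 1) s ->
  perm_eq s (nseq (count_mem 1 s) 1 ++ nseq (count_mem 2 s) 2 ++ filter (leq 3) s).
Proof.
move=> s_gt0; apply/permP => a; rewrite count_decomp.
elim: s s_gt0 => [|x s IH] /=; first by rewrite !muln0.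
by case/andP=> + /IH ->; case: x => [|[|[|x]]] //= _; lia.
Qed.

Lemma sort_geq_perm s D : sorted geq D -> sort geq s = D <-> perm_eq s D.
Proof.
have geq_total : total geq by move=> a b; apply: leq_total.
have geq_trans : transitive geq by move=> b a c /= ba cb; apply: leq_trans cb ba.
have geq_anti : antisymmetric geq by move=> a b; rewrite andbC; apply: anti_leq.
move=> sorted_D; rewrite -{1}(sorted_sort geq_trans sorted_D).
exact: (rwP (perm_sortP geq_total geq_trans geq_anti _ _)).
Qed.

Lemma path_geq_nseq a c m : c <= a -> path geq a (nseq m c).
Proof.
move=> le_ca; case: m => //= m; rewrite le_ca /=.
by elim: m => //= m ->; rewrite andbT.
Qed.

Lemma sorted_4_2s m : sorted geq (4 :: nseq m 2).
Proof. exact: path_geq_nseq. Qed.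

Lemma sorted_4_3_2s_1 m : sorted geq [:: 4, 3 & rcons (nseq m 2) 1].
Proof. by rewrite /= rcons_path path_geq_nseq //=; elim: m => //= -[]. Qed.

Section DegreeSequence.

Variables (n L A : nat) (h : seq nat).
Hypotheses (h_ge3 : all (leq 3) h) (h_has4 : has (leq 4) h).
Hypotheses (size_t : L + A + size h = n) (sumn_t : L + 2 * A + sumn h = 2 * n + 2).

Let t := nseq L 1 ++ nseq A 2 ++ h.
Let irr := dist_sum t t %/ 2.

Lemma sumn_h : sumn h = L + 2 * size h + 2.
Proof. lia. Qed.

Lemma size_h_le : size h <= L.+1.
Proof. have := sumn_gt_size h_ge3 h_has4; rewrite sumn_h; lia. Qed.

Lemma size_h_gt0 : 0 < size h.
Proof. by case: (h) h_has4. Qed.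

Lemma irr_decomp :
  irr = L * A + L * (L + size h + 2) + A * (L + 2) + dist_sum h h %/ 2.
Proof.
have h_ge1 : all (leq 1) h by apply: sub_all h_ge3 => x; apply: leq_trans.
have h_ge2 : all (leq 2) h by apply: sub_all h_ge3 => x; apply: leq_trans.
have := sum_absdiff_lb h_ge1; have := sum_absdiff_lb h_ge2; rewrite sumn_h.
rewrite /irr /t !dist_sum_cat !dist_sum_catr !dist_sum_nseq !dist_sum_nseql.
rewrite /absdiff /= !muln0 !add0n => abs2 abs1.
rewrite -divnMDl //; congr (_ %/ 2); nia.
Qed.

Lemma h_no_ones : L = 0 -> h = [:: 4].
Proof.
move=> L0; have := sumn_h; have := size_h_le; have := size_h_gt0.
case: (h) => [|x [|y r]] //=; rewrite L0 => _; last by lia.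
by move=> _ sum_x; congr [:: _]; lia.
Qed.

Lemma h_one_one_two : L = 1 -> size h = 2 -> perm_eq h [:: 3; 4].
Proof.
move=> L1; have := sumn_h; move: h_ge3.
case: (h) => [|x [|y [|z r]]] //= /and3P[x3 y3 _] + _; rewrite L1 => sum_xy.
by have [[-> ->]|[-> ->]] : (x = 3 /\ y = 4) \/ (x = 4 /\ y = 3) by lia.
Qed.

Lemma irr_no_ones : L = 0 -> irr = 2 * n - 2.
Proof.
move=> L0; rewrite irr_decomp h_no_ones //.
have -> : dist_sum [:: 4] [:: 4] = 0 by rewrite /dist_sum unlock.
move: size_t; rewrite h_no_ones // L0 /=; lia.
Qed.

Lemma irr_one_one_two : L = 1 -> size h = 2 -> irr = 4 * n - 6.
Proof.
move=> L1 k2; rewrite irr_decomp.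
have eq_h := h_one_one_two L1 k2.
rewrite (dist_sum_perm eq_h eq_h) L1 k2.
have -> : dist_sum [:: 3; 4] [:: 3; 4] = 2 by rewrite /dist_sum unlock.
move: size_t; rewrite L1 k2; lia.
Qed.

Lemma irr_gt : 6 <= n -> 0 < L -> ~ (L = 1 /\ size h = 2) -> 4 * n - 6 < irr.
Proof.
move=> n_ge6 L_gt0 not_112; rewrite irr_decomp -size_t.
have := size_h_le; have := size_h_gt0; move: not_112 n_ge6; rewrite -size_t.
have : L = 1 \/ L = 2 \/ L = 3 \/ 4 <= L by lia.
case=> [->|[->|[->|L_ge4]]]; nia.
Qed.

Lemma count_ones_t : count_mem 1 t = L.
Proof.
rewrite /t count_decomp /= mul1n mul0n addn0.
suff /count_memPn -> : 1 \notin h by rewrite addn0.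
by apply/negP => /(allP h_ge3).
Qed.

Lemma perm_4_2s : perm_eq t (4 :: nseq (n - 1) 2) <-> L = 0.
Proof.
split=> [/permP/(_ (pred1 1))|L0]; first by rewrite count_ones_t /= count_nseq mul0n.
rewrite /t h_no_ones // L0 /= -cat1s perm_catC.
by move: size_t; rewrite h_no_ones // L0 /= => <-; rewrite add0n addnK.
Qed.

Lemma perm_4_3_2s_1 :
  perm_eq t [:: 4, 3 & rcons (nseq (n - 3) 2) 1] <-> L = 1 /\ size h = 2.
Proof.
split=> [eq_t|[L1 k2]].
  have count_h : count (leq 3) h = size h by apply/eqP; rewrite -all_count.
  have := permP eq_t (pred1 1); have := permP eq_t (leq 3).
  rewrite count_ones_t /t count_decomp count_h /= -cats1 !count_cat !count_nseq /=.
  lia.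
apply/permP => a; rewrite /t count_decomp (permP (h_one_one_two L1 k2)).
rewrite /= -cats1 count_cat count_nseq /=.
move: size_t; rewrite L1 k2; lia.
Qed.

Lemma irr_bounds : 6 <= n ->
  ((2 * n - 2 <= irr) /\
   (irr = 2 * n - 2 <-> perm_eq t (4 :: nseq (n - 1) 2)))
  /\
  (~ perm_eq t (4 :: nseq (n - 1) 2) ->
   (4 * n - 6 <= irr) /\
   (irr = 4 * n - 6 <-> perm_eq t [:: 4, 3 & rcons (nseq (n - 3) 2) 1])).
Proof.
move=> n_ge6; rewrite perm_4_2s perm_4_3_2s_1.
have [L0|L_gt0] := posnP L; first by rewrite irr_no_ones //; lia.
have [[L1 k2]|not_112] : (L = 1 /\ size h = 2) \/ ~ (L = 1 /\ size h = 2) by lia.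
  by rewrite irr_one_one_two //; lia.
have := irr_gt n_ge6 L_gt0 not_112; lia.
Qed.

End DegreeSequence.

Lemma sum_deg_edges n (e : rel 'I_n) : simple_graph e ->
  \sum_(x : 'I_n) deg e x = 2 * #|edges e|.
Proof.
case=> e_sym e_irr; pose up (x y : 'I_n) : nat := (x < y) && e x y.
have deg_up x : deg e x = \sum_(y : 'I_n) (up x y + up y x).
  rewrite /deg -sum1dep_card big_mkcond /=; apply: eq_bigr => y _.
  rewrite /up (e_sym y x).
  by case: (ltngtP x y) => [_|_|/val_inj->]; rewrite ?e_irr //=; case: (e x y).
have edges_up : #|edges e| = \sum_(x : 'I_n) \sum_(y : 'I_n) up x y.
  rewrite /edges -sum1dep_card big_mkcond pair_big /=.
  by apply: eq_bigr => p _; rewrite /up; case: (_ && _).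
under eq_bigr => x _ do rewrite deg_up big_split.
by rewrite big_split /= [X in _ + X]exchange_big -edges_up addnn mul2n.
Qed.

Lemma deg_gt0 n (e : rel 'I_n) : 1 < n -> connected_graph e -> forall x, 0 < deg e x.
Proof.
move=> n_gt1 e_conn x.
have : 0 < #|[set~ x]| by rewrite cardsC1 card_ord; lia.
rewrite card_gt0 => /set0Pn[y]; rewrite in_setC1 => y_neq_x.
case/connectP: (e_conn x y) => -[/= _ y_eq_x|z p /= /andP[e_xz _] _].
  by rewrite y_eq_x eqxx in y_neq_x.
by rewrite card_gt0; apply/set0Pn; exists z; rewrite inE.
Qed.

Lemma cycle_neighbours n (e : rel 'I_n) c v : symmetric e -> is_graph_cycle e c -> v \in c ->
  exists y z, [/\ y \in c, z \in c, y != z, e v y & e v z].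
Proof.
move=> e_sym [c_uniq c_size c_cycle] /rot_to[i c' c_rot].
have mem_c w : w \in v :: c' -> w \in c by rewrite -c_rot mem_rot.
have : [/\ uniq (v :: c'), 3 <= size (v :: c') & cycle e (v :: c')].
  by rewrite -c_rot rot_uniq size_rot rot_cycle.
case: c' mem_c {c_rot} => [|y r] mem_c; first by case.
case/lastP: r mem_c => [|m z] mem_c; first by case.
case=> /= /andP[_ /andP[+ _]] _ /andP[e_vy]; rewrite rcons_path last_rcons.
rewrite mem_rcons inE negb_or => /andP[y_neq_z _] /andP[_ e_zv].
exists y, z; split=> //; last by rewrite e_sym.
  by apply: mem_c; rewrite !inE eqxx orbT.
by apply: mem_c; rewrite !inE mem_rcons inE eqxx !orbT.
Qed.

Lemma Bplus_deg_ge4 n (e : rel 'I_n) : in_Bplus e -> exists v, 4 <= deg e v.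
Proof.
case=> [[[e_sym e_irr] _] [c1 [c2 [cyc1 cyc2 /eqP/cards1P[v c12]]]]].
have /andP[v1 v2] : (v \in c1) && (v \in c2) by have := set11 v; rewrite -c12 inE.
have sep a b : a \in c1 -> b \in c2 -> e v a -> a != b.
  move=> a1 b2 e_va; apply: contraTneq e_va => a_eq_b.
  have : a \in [set v] by rewrite -c12 inE a1 a_eq_b b2.
  by move/set1P->; rewrite e_irr.
have [y1 [z1 [y1c z1c yz1 ey1 ez1]]] := cycle_neighbours e_sym cyc1 v1.
have [y2 [z2 [y2c z2c yz2 ey2 ez2]]] := cycle_neighbours e_sym cyc2 v2.
exists v; apply/card_geqP; exists [:: y1; z1; y2; z2]; split=> //.
  by rewrite /= !inE !negb_or yz1 yz2 !sep ?andbT.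
by move=> w; rewrite !inE => /or4P[]/eqP->.
Qed.

Definition degrees n (e : rel 'I_n) : seq nat := [seq deg e x | x <- enum 'I_n].

Lemma irr_t_dist_sum n (e : rel 'I_n) : irr_t e = dist_sum (degrees e) (degrees e) %/ 2.
Proof.
rewrite /irr_t /dist_sum /degrees big_map big_enum; congr (_ %/ 2).
by apply: eq_bigr => x _; rewrite big_map big_enum.
Qed.

Lemma degseq_perm n (e : rel 'I_n) D : sorted geq D -> degseq e = D <-> perm_eq (degrees e) D.
Proof. exact: sort_geq_perm. Qed.

Theorem theorem12 (n : nat) (e : rel 'I_n) :
  (6 <= n)%N -> in_Bplus e ->
  ((2 * n - 2 <= irr_t e)%N /\
   (irr_t e = 2 * n - 2 <-> degseq e = 4 :: nseq (n - 1) 2))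
  /\
  (degseq e <> 4 :: nseq (n - 1) 2 ->
   (4 * n - 6 <= irr_t e)%N /\
   (irr_t e = 4 * n - 6 <-> degseq e = [:: 4, 3 & rcons (nseq (n - 3) 2) 1])).
Proof.
move=> n_ge6 e_Bplus; have [[e_simple [e_conn e_size]] _] := e_Bplus.
have [v deg_v] := Bplus_deg_ge4 e_Bplus.
set s := degrees e.
have s_gt0 : all (leq 1) s.
  by apply/allP => _ /mapP[x _ ->]; apply: deg_gt0 => //; lia.
have eq_s := perm_decomp s_gt0.
have h_has4 : has (leq 4) (filter (leq 3) s).
  by apply/hasP; exists (deg e v); rewrite // mem_filter (leq_trans _ deg_v) // map_f ?mem_enum.
have size_s : size s = n by rewrite size_map size_enum_ord.
have sumn_s : sumn s = 2 * n + 2.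
  by rewrite sumnE big_map big_enum sum_deg_edges // e_size; lia.
rewrite (perm_size eq_s) !size_cat !size_nseq addnA in size_s.
rewrite (perm_sumn eq_s) !sumn_cat !sumn_nseq in sumn_s.
rewrite irr_t_dist_sum -/s (dist_sum_perm eq_s eq_s).
rewrite !degseq_perm ?sorted_4_2s ?sorted_4_3_2s_1 // -/s !(permPl eq_s).
apply: irr_bounds (filter_all _ _) h_has4 size_s _ n_ge6; lia.
Qed.
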